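(* Let $\Sigma$ be an alphabet with $|\Sigma|\geq 3$ and let $T=U\cdot P\cdot V$ be a string over $\Sigma$ such that $P$ is a non-empty string occurring exactly once in $T$ and $|U|,|V|<|P|$. Then there exists a string $P'$ over $\Sigma$ with $d_H(P,P')=1$ such that $T'=U\cdot P'\cdot V$ has no occurrence of $P$.
   Context: $\cdot$ denotes concatenation; $d_H$ is the Hamming distance between strings of equal length. *)

From mathcomp Require Import all_boot.
Set Implicit Arguments. Unset Strict Implicit. Unset Printing Implicit Defensive.

Definition occurs_at (S : eqType) (P T : seq S) (i : nat) : bool :=
  (i + size P <= size T) && (take (size P) (drop i T) == P).

Definition occ_count (S : eqType) (P T : seq S) : nat :=
  count (occurs_at P T) (iota 0 (size T).+1).

(* Hamming distance: number of mismatching positions (used on equal-length strings) *)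
Definition hamming (S : eqType) (x y : seq S) : nat :=
  count (fun p => p.1 != p.2) (zip x y).

(* Replace the first letter [a] of [P] by a letter [c].  An occurrence of [P]
   in [U ++ c :: behead P ++ V] starting after [|U|] avoids the modified
   position, so it is an occurrence in the original text, excluded by
   uniqueness.  One starting at [i <= |U|] covers the modified position (as
   [|U| < |P|]) and forces [c = P[|U| - i]].  If two such positions
   [i2 < i1] are realizable, comparing both occurrences with the original one
   at [|U|] gives [P[|U| - i2] = P[i1 - i2] = a]; hence only the largest
   realizable position can force a letter other than [a], and with three
   letters [c] can avoid both. *)
From mathcomp Require Import all_boot zify.

Set Implicit Arguments.
Unset Strict Implicit.
Unset Printing Implicit Defensive.

Lemma count_le1_eq (T : eqType) (p : pred T) (s : seq T) (x y : T) :
  count p s <= 1 -> x \in s -> y \in s -> p x -> p y -> x = y.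
Proof.
rewrite -size_filter => size_le1 xs ys px py.
have: x \in filter p s by rewrite mem_filter px xs.
have: y \in filter p s by rewrite mem_filter py ys.
by case: (filter p s) size_le1 => [|z [|]] //=; rewrite !inE => _ /eqP-> /eqP->.
Qed.

Lemma exists_neq2 (T : finType) (x y : T) :
  2 < #|T| -> exists c : T, (c != x) && (c != y).
Proof.
move=> card_gt2.
have: 0 < #|[predC pred2 x y]|.
  move: card_gt2; rewrite -(cardC (pred2 x y)) card2 addSn ltnS.
  by case: (x != y); rewrite ?add0n ?add1n // => /ltnW.
by case/card_gt0P=> c; rewrite !inE negb_or => ?; exists c.
Qed.

Lemma hamming_cons (S : eqType) (x y : S) (s t : seq S) :
  hamming (x :: s) (y :: t) = (x != y) + hamming s t.
Proof. by []. Qed.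

Lemma hamming_refl (S : eqType) (s : seq S) : hamming s s = 0.
Proof. by elim: s => //= x s; rewrite /hamming /= eqxx. Qed.

Section Occurrences.

Variable S : eqType.
Implicit Types (P T : seq S) (i j : nat).

Lemma occurs_atP (x0 : S) P T i :
  occurs_at P T i <->
  i + size P <= size T /\ forall k, k < size P -> nth x0 T (i + k) = nth x0 P k.
Proof.
rewrite /occurs_at; split.
  case/andP=> fits /eqP window; split=> // k lt_k.
  by rewrite -[in RHS]window nth_take // nth_drop.
case=> fits matches; rewrite fits /=; apply/eqP.
have size_window : size (take (size P) (drop i T)) = size P.
  by rewrite size_takel // size_drop; lia.
apply: (@eq_from_nth _ x0) => // k; rewrite size_window => lt_k.
by rewrite nth_take // nth_drop matches.
Qed.

Lemma occurs_at_cat U P V : occurs_at P (U ++ P ++ V) (size U).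
Proof.
by rewrite /occurs_at drop_size_cat // take_size_cat // !size_cat eqxx; lia.
Qed.

Lemma occ_count_eq0 P T : (forall i, ~~ occurs_at P T i) -> occ_count P T = 0.
Proof.
move=> none; rewrite /occ_count (@eq_count _ _ pred0) ?count_pred0 // => i.
exact/negbTE.
Qed.

Lemma occ_count1_eq P T i j :
  occ_count P T = 1 -> occurs_at P T i -> occurs_at P T j -> i = j.
Proof.
have in_range k : occurs_at P T k -> k \in iota 0 (size T).+1.
  by case/andP; rewrite mem_iota; lia.
move=> count1 occ_i occ_j.
apply: count_le1_eq (in_range _ occ_i) (in_range _ occ_j) occ_i occ_j.
by rewrite -/(occ_count P T) count1.
Qed.

End Occurrences.

Arguments occurs_atP {S} x0 {P T i}.

Section FirstLetterSubstitution.

Variables (S : eqType) (U W V : seq S) (a : S).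
Local Notation P := (a :: W).
Local Notation text c := (U ++ (c :: W) ++ V).

Lemma nth_text_at (c : S) : nth a (text c) (size U) = c.
Proof. by rewrite nth_cat ltnn subnn. Qed.

Lemma nth_text_neq (b c : S) n :
  n != size U -> nth a (text c) n = nth a (text b) n.
Proof.
rewrite !nth_cat; case: ltngtP => // lt_Un _.
have: 0 < n - size U by rewrite subn_gt0.
by case: (n - size U).
Qed.

Lemma text_occurs_after (b c : S) i :
  size U < i -> occurs_at P (text c) i -> occurs_at P (text b) i.
Proof.
move=> lt_Ui /(occurs_atP a)[fits matches]; apply/(occurs_atP a); split.
  by move: fits; rewrite !size_cat.
by move=> k lt_k; rewrite (nth_text_neq c); [exact: matches | lia].
Qed.

Hypothesis short_U : size U <= size W.

Lemma text_occurs_before (c : S) i :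
  i <= size U -> occurs_at P (text c) i -> c = nth a P (size U - i).
Proof.
move=> le_iU /(occurs_atP a)[_ matches].
by rewrite -matches /= ?subnKC ?nth_text_at //; lia.
Qed.

Lemma text_occurs_before2 (c1 c2 : S) i1 i2 :
  i2 < i1 < size U ->
  occurs_at P (text c1) i1 -> occurs_at P (text c2) i2 -> c2 = a.
Proof.
case/andP=> lt_i21 lt_i1U occ1 occ2.
have /(occurs_atP a)[_ orig] := occurs_at_cat U P V.
have /(occurs_atP a)[_ match1] := occ1.
have /(occurs_atP a)[_ match2] := occ2.
have lt_P k : k <= size U -> k < size P.
  by move=> le_k; rewrite ltnS (leq_trans le_k).
rewrite (text_occurs_before (ltnW (ltn_trans lt_i21 lt_i1U)) occ2).
rewrite -match1 ?lt_P ?leq_subr // (nth_text_neq a); last lia.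
have -> : i1 + (size U - i2) = size U + (i1 - i2) by lia.
rewrite orig; last by apply: lt_P; lia.
rewrite -match2; last by apply: lt_P; lia.
have neq_i1U : i1 != size U by rewrite ltn_eqF.
rewrite subnKC ?(ltnW lt_i21) //.
rewrite (nth_text_neq a _ neq_i1U) (nth_text_neq c1 _ neq_i1U).
by rewrite -[i1]addn0 match1.
Qed.

Lemma text_occurs_before_letters :
  exists x : S, forall c i,
    i <= size U -> occurs_at P (text c) i -> c = x \/ c = a.
Proof.
pose realizable i :=
  (i < size U) && occurs_at P (text (nth a P (size U - i))) i.
have realizableP c i : i < size U -> occurs_at P (text c) i -> realizable i.
  move=> lt_iU occ; rewrite /realizable lt_iU.
  by rewrite -(text_occurs_before (ltnW lt_iU) occ).
have at_U c : occurs_at P (text c) (size U) -> c = a.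
  by move/(text_occurs_before (leqnn _)); rewrite subnn.
have [/hasP[i0 _ real_i0] | /hasPn none] :=
  boolP (has realizable (iota 0 (size U))).
  have bounded i : realizable i -> i <= size U by case/andP=> /ltnW.
  case: (ex_maxnP (ex_intro _ i0 real_i0) bounded) => i1.
  case/andP=> lt_i1U occ1 max_i1.
  exists (nth a P (size U - i1)) => c i.
  rewrite leq_eqVlt => /orP[/eqP-> /at_U | lt_iU occ]; first by right.
  have := max_i1 i (realizableP c i lt_iU occ).
  rewrite leq_eqVlt => /orP[/eqP eq_i | lt_i1].
    by left; rewrite (text_occurs_before (ltnW lt_iU) occ) eq_i.
  by right; apply: text_occurs_before2 occ1 occ; rewrite lt_i1.
exists a => c i.
rewrite leq_eqVlt => /orP[/eqP-> /at_U | lt_iU occ]; first by right.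
move: (none i); rewrite mem_iota add0n lt_iU.
by rewrite (realizableP c i lt_iU occ) => /(_ isT).
Qed.

End FirstLetterSubstitution.

Theorem lemma7 (Sigma : finType) (U P V : seq Sigma) :
  2 < #|Sigma| ->
  0 < size P ->
  occ_count P (U ++ P ++ V) = 1 ->
  size U < size P -> size V < size P ->
  exists P' : seq Sigma,
    size P' = size P /\ hamming P P' = 1 /\
    occ_count P (U ++ P' ++ V) = 0.
Proof.
case: P => [//|a W] card_gt2 _ unique_occ short_U _.
have [x letters] := text_occurs_before_letters V a short_U.
have [c /andP[c_neq_x c_neq_a]] := exists_neq2 x a card_gt2.
exists (c :: W); split=> //; split.
  by rewrite hamming_cons hamming_refl eq_sym c_neq_a.
apply: occ_count_eq0 => i; apply/negP => occ.
case: (leqP i (size U)) => [le_iU | lt_Ui].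
  by have [] := letters c i le_iU occ; apply/eqP.
have occ_orig := text_occurs_after a lt_Ui occ.
have := occ_count1_eq unique_occ (occurs_at_cat U (a :: W) V) occ_orig.
by move=> eq_i; rewrite eq_i ltnn in lt_Ui.
Qed.
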